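(* Let $p\in(1,\infty)$, let $\mathbf{A}=[\boldsymbol{a}_1,\dots,\boldsymbol{a}_m]^T\in\mathbb{R}^{m\times n}$ with entries $a_{ij}$, and let $\mathbf{y}\in\mathbb{R}^m$, and assume every column of $\mathbf{A}$ has at least one nonzero entry. Define $f_{LR}(\boldsymbol{x})=\sum_{i=1}^m |y_i-\boldsymbol{a}_i^T\boldsymbol{x}|^p$ for $\boldsymbol{x}\in\mathbb{R}^n$. Starting from an arbitrary $\boldsymbol{x}^0\in\mathbb{R}^n$, generate a sequence $\{\boldsymbol{x}^k\}$ (the PROMPT iteration) as follows: given $\boldsymbol{x}^k$, for each $j=1,\dots,n$ set $$x_j^{k+1}\in\underset{x_j\in\mathbb{R}}{\arg\min}\sum_{\substack{i=1\\ a_{ij}\neq 0}}^{m} |a_{ij}|^{p}\,\bigl|x_j-s_{ij}^k\bigr|^{p},\qquad s_{ij}^k = x_j^k+\frac{y_i-\boldsymbol{a}_i^T\boldsymbol{x}^k}{(n+1)\,a_{ij}}.$$ Then the sequence $\{f_{LR}(\boldsymbol{x}^k)\}$ is monotonically non-increasing (and hence converges to a finite value), and every limit point of $\{\boldsymbol{x}^k\}$ is a stationary point of $f_{LR}$.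
   Context: This update is the minimization of the majorizer of $f_{LR}$ obtained by writing $y_i-\boldsymbol{a}_i^T\boldsymbol{x}=\boldsymbol{c}_i^T\tilde{\boldsymbol{x}}$ with $\boldsymbol{c}_i=[-\boldsymbol{a}_i^T,\ y_i]^T$, $\tilde{\boldsymbol{x}}=[\boldsymbol{x}^T,1]^T$, and applying Jensen's inequality $|\boldsymbol{c}^T\tilde{\boldsymbol{x}}|^p\le \sum_{j=1}^{n+1}\frac{1}{n+1}|(n+1)c_j(\tilde x_j-\tilde x_j^k)+\boldsymbol{c}^T\tilde{\boldsymbol{x}}^k|^p$; the resulting surrogate is separable in the coordinates $x_j$. *)

From HB Require Import structures.
From mathcomp Require Import all_boot all_order all_algebra.
From mathcomp Require Import all_classical all_reals all_analysis.
Set Implicit Arguments. Unset Strict Implicit. Unset Printing Implicit Defensive.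
Import Order.TTheory GRing.Theory Num.Theory.
Import numFieldNormedType.Exports.
Local Open Scope ring_scope.

Definition rowdot (R : realType) (m n : nat) (A : 'M[R]_(m, n))
  (i : 'I_m) (x : 'rV[R]_n) : R := \sum_(j < n) A i j * x ord0 j.

Definition fLR (R : realType) (m n : nat) (p : R) (A : 'M[R]_(m, n))
  (y : 'I_m -> R) (x : 'rV[R]_n) : R :=
  \sum_(i < m) `|y i - rowdot A i x| `^ p.

Definition sPROMPT (R : realType) (m n : nat) (A : 'M[R]_(m, n))
  (y : 'I_m -> R) (xk : 'rV[R]_n) (i : 'I_m) (j : 'I_n) : R :=
  xk ord0 j + (y i - rowdot A i xk) / ((n + 1)%:R * A i j).

(* the separable surrogate in coordinate j, evaluated at t *)
Definition gPROMPT (R : realType) (m n : nat) (p : R) (A : 'M[R]_(m, n))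
  (y : 'I_m -> R) (xk : 'rV[R]_n) (j : 'I_n) (t : R) : R :=
  \sum_(i < m | A i j != 0) `|A i j| `^ p * `|t - sPROMPT A y xk i j| `^ p.

(* PROMPT is a majorization-minimization scheme.  With [r_i = y_i - a_i^T x^k],
   the residual [y_i - a_i^T z] is the mean of the [n + 1] numbers [r_i] and
   [(n+1) a_ij (x^k_j - z_j) + r_i]; Jensen's inequality for the convex [|.|^p]
   bounds [f_LR(z)] by a surrogate that equals [f_LR(x^k)] at [z = x^k] and is,
   up to an additive constant, [c * sum_j g_j(z_j)] with [c = (n+1)^(p-1)] and
   [g_j] the coordinate functions minimized by the iteration.  Hence
   [c (g_j(x^k_j) - g_j(t)) <= f_LR(x^k) - f_LR(x^(k+1))] for all [j] and [t]:
   the values decrease, converge, and these gaps tend to [0].  Along a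
   subsequence converging to [x*], continuity shows that [x*_j] minimizes the
   [g_j] built at [x*], so [g_j'(x*_j) = 0]; and for the [g_j] built at any [x],
   [g_j'(x_j)] is [(n+1)^(1-p)] times the [j]-th partial derivative of [f_LR]
   at [x], so [x*] is stationary. *)

From HB Require Import structures.
From mathcomp Require Import all_boot all_order all_algebra.
From mathcomp Require Import all_classical all_reals all_analysis.
From mathcomp Require Import ring lra.
Set Implicit Arguments.
Unset Strict Implicit.
Unset Printing Implicit Defensive.
Import Order.TTheory GRing.Theory Num.Theory.
Import numFieldNormedType.Exports.
Local Open Scope classical_set_scope.
Local Open Scope ring_scope.

Section AbsPow.
Context {R : realType}.
Variable p : R.

Definition abspow (t : R) : R := `|t| `^ p.

Definition abspow' (t : R) : R := p * `|t| `^ (p - 1) * Num.sg t.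

Lemma abspow'M (c t : R) :
  abspow' (c * t) = `|c| `^ (p - 1) * Num.sg c * abspow' t.
Proof. by rewrite /abspow' normrM powRM ?normr_ge0// sgrM; ring. Qed.

Hypothesis p_ge1 : 1 <= p.

Lemma convex_abspow (l a b : R) : 0 <= l -> l <= 1 ->
  abspow (l * a + (1 - l) * b) <= l * abspow a + (1 - l) * abspow b.
Proof.
move=> l_ge0 l_le1; rewrite /abspow.
have l'_ge0 : 0 <= 1 - l by rewrite subr_ge0.
apply: (@le_trans _ _ ((l * `|a| + (1 - l) * `|b|) `^ p)).
  rewrite ge0_ler_powR ?nnegrE ?(le_trans ler01 p_ge1) ?addr_ge0 ?mulr_ge0//.
  by rewrite (le_trans (ler_normD _ _))// !normrM (ger0_norm l_ge0) (ger0_norm l'_ge0).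
have := convex_powR p_ge1 (Itv01 l_ge0 l_le1) (x := `|a|) (y := `|b|).
by rewrite !convRE; apply; rewrite inE /= in_itv /= normr_ge0.
Qed.

Lemma abspow_jensen n (a : R) (v : 'I_n -> R) :
  abspow ((a + \sum_(j < n) v j) / n.+1%:R) <=
  (abspow a + \sum_(j < n) abspow (v j)) / n.+1%:R.
Proof.
elim: n v => [|n IHn] v; first by rewrite !big_ord0 !addr0 !divr1.
pose l : R := n.+1%:R / n.+2%:R.
have l_ge0 : 0 <= l by rewrite divr_ge0// ler0n.
have l_le1 : l <= 1 by rewrite ler_pdivrMr ?ltr0n// mul1r ler_nat.
have meanS u U w : (u + (U + w)) / n.+2%:R = l * ((u + U) / n.+1%:R) + (1 - l) * w.
  by rewrite /l -natr1; field; rewrite nat1r natr1 !pnatr_eq0.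
rewrite !big_ord_recr /= !meanS.
apply: le_trans (convex_abspow _ _ l_ge0 l_le1) _.
by rewrite lerD2r; apply: ler_wpM2l => //; exact: IHn.
Qed.

Hypothesis p_gt1 : 1 < p.

Lemma abspow0 : abspow 0 = 0.
Proof. by rewrite /abspow normr0 powR0// gt_eqF// (lt_trans ltr01 p_gt1). Qed.

(* [|h|^p / |h| = |h|^(p-1)] is below [e] as soon as [|h| < e^(1/(p-1))]. *)
Lemma is_derive_abspow0 : is_derive (0 : R) 1 abspow 0.
Proof.
have p1_gt0 : 0 < p - 1 by rewrite subr_gt0.
have quotient_cvg0 :
    (fun h : R => h^-1 *: (abspow (h *: 1 + 0) - abspow 0)) @ 0^' --> (0 : R).
  apply/cvgrPdist_lt => e e_gt0.
  pose d := e `^ (p - 1)^-1.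
  have d_gt0 : 0 < d by rewrite powR_gt0.
  near=> h.
  have h_neq0 : h != 0 by near: h; exact: nbhs_dnbhs_neq.
  have h_lt_d : `|h| < d by near: h; exact: dnbhs0_lt.
  rewrite abspow0 subr0 sub0r normrN /abspow addr0 [_%:A]mulr1 normrM normfV.
  rewrite norm_powR// normr_id mulrC -[X in X^-1](powRr1 (normr_ge0 h)).
  rewrite -powRB ?normr_eq0 ?h_neq0 ?implybT//.
  have -> : e = d `^ (p - 1) by rewrite /d -powRrM mulVf ?gt_eqF// powRr1// ltW.
  by apply: gt0_ltr_powR; rewrite // nnegrE ltW.
apply: DeriveDef; first by apply/cvg_ex; exists 0.
exact: cvg_lim.
Unshelve. all: by end_near. Qed.

Lemma is_derive_abspow (t : R) : is_derive t 1 abspow (abspow' t).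
Proof.
have [t_lt0|t_gt0|->] := ltgtP t 0; last first.
- by rewrite /abspow' sgr0 mulr0; exact: is_derive_abspow0.
- rewrite /abspow' gtr0_norm// gtr0_sg// mulr1.
  apply: (@near_eq_is_derive _ _ _ (@powR R ^~ p)); last exact: is_derive1_powR.
  near=> s; rewrite /abspow /= gtr0_norm//; near: s; exact: lt_nbhsr.
- rewrite /abspow' ltr0_norm// ltr0_sg//.
  apply: (@near_eq_is_derive _ _ _ ((@powR R ^~ p) \o -%R)).
    near=> s; rewrite /abspow /= ltr0_norm//; near: s; exact: lt_nbhsl.
  by apply: is_derive1_comp; apply: is_derive1_powR; rewrite oppr_gt0.
Unshelve. all: by end_near. Qed.

Lemma continuous_abspow : continuous abspow.
Proof.
move=> t; apply/differentiable_continuous/derivable1_diffP.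
by have [] := is_derive_abspow t.
Qed.

End AbsPow.

Lemma is_derive_along_line {R : numFieldType} {V W : normedModType R}
    (F : V -> W) (x v : V) (phi : R -> W) (d : W) :
  (forall h : R, F (h *: v + x) = phi h) -> is_derive (0 : R) 1 phi d ->
  is_derive x v F d.
Proof.
move=> Fphi [phi_derivable phi'E].
have quotientE : (fun h : R => h^-1 *: ((F \o shift x) (h *: v) - F x)) =
    (fun h : R => h^-1 *: ((phi \o shift 0) (h *: 1) - phi 0)).
  by apply/funext => h /=; rewrite Fphi -(Fphi 0) scale0r add0r addr0 [_ *: 1]mulr1.
by apply: DeriveDef; rewrite /derivable /derive /= quotientE.
Qed.

Lemma is_derive_global_min {R : realFieldType} (g : R -> R) (c d : R) :
  (forall t, derivable g t 1) -> (forall t, g c <= g t) -> is_derive c 1 g d ->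
  d = 0.
Proof.
move=> g_derivable c_min [_ <-].
have le_ab : c - 1 <= c + 1 by lra.
have c_in : c \in `]c - 1, c + 1[ by rewrite in_itv /=; apply/andP; split; lra.
by have [] := derive1_at_min le_ab (fun t _ => g_derivable t) c_in (fun t _ => c_min t).
Qed.

Lemma increasing_cvgn_infty (phi : nat -> nat) :
  (forall k, (phi k < phi k.+1)%N) -> phi @ \oo --> \oo.
Proof.
move=> phi_incr P [N _ PN]; exists N => // k /= le_Nk; apply: PN.
have : (k <= phi k)%N.
  by elim: k {le_Nk} => // k IHk; exact: leq_ltn_trans IHk (phi_incr k).
exact: leq_trans.
Qed.

Section PROMPT.
Context {R : realType} {m n : nat}.
Variables (p : R) (A : 'M[R]_(m, n)) (y : 'I_m -> R).

Let N : R := n.+1%:R.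
Let N_gt0 : 0 < N. Proof. by rewrite ltr0n. Qed.

Let c : R := N `^ p / N.
Let c_gt0 : 0 < c. Proof. by rewrite divr_gt0 ?powR_gt0. Qed.

Definition residual (x : 'rV[R]_n) (i : 'I_m) : R := y i - rowdot A i x.

(* The paper's Jensen bound for [c_i = (-a_i, y_i)] and [x~ = (z, 1)]: the
   [(n+1)]-th summand, where [x~] does not move, is [abspow p (residual xk i)]. *)
Definition majorizer (xk z : 'rV[R]_n) : R :=
  \sum_(i < m) (abspow p (residual xk i) +
     \sum_(j < n) abspow p (N * A i j * (xk ord0 j - z ord0 j) + residual xk i)) / N.

Definition majorizer_offset (xk : 'rV[R]_n) : R :=
  \sum_(i < m) (abspow p (residual xk i) +
     \sum_(j < n) (if A i j == 0 then abspow p (residual xk i) else 0)) / N.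

Lemma majorizer_id (xk : 'rV[R]_n) : majorizer xk xk = fLR p A y xk.
Proof.
apply: eq_bigr => i _.
under eq_bigr do rewrite subrr mulr0 add0r.
rewrite sumr_const card_ord -mulr_natr /abspow /residual.
by field; rewrite gt_eqF.
Qed.

Lemma majorizer_separable (xk z : 'rV[R]_n) :
  majorizer xk z =
  majorizer_offset xk + c * \sum_(j < n) gPROMPT p A y xk j (z ord0 j).
Proof.
have term i j : abspow p (N * A i j * (xk ord0 j - z ord0 j) + residual xk i) =
    (if A i j == 0 then abspow p (residual xk i) else 0) +
    N `^ p * (if A i j != 0 then `|A i j| `^ p *
      `|z ord0 j - sPROMPT A y xk i j| `^ p else 0).
  have [->|a_neq0] := eqVneq (A i j) 0.
    by rewrite mulr0 mul0r add0r mulr0 addr0.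
  have -> : N * A i j * (xk ord0 j - z ord0 j) + residual xk i =
      - (N * A i j) * (z ord0 j - sPROMPT A y xk i j).
    by rewrite /sPROMPT /residual addn1 -/N; field; rewrite a_neq0 gt_eqF.
  by rewrite add0r /abspow normrM normrN normrM !powRM// (gtr0_norm N_gt0) mulrA.
rewrite /majorizer /majorizer_offset.
under eq_bigr => i _ do
  rewrite (eq_bigr _ (fun j _ => term i j)) big_split /= -mulr_sumr addrA mulrDl.
rewrite big_split /=; congr (_ + _).
under eq_bigr do rewrite mulrAC.
rewrite -mulr_sumr exchange_big /=; congr (_ * _); apply: eq_bigr => j _.
by rewrite /gPROMPT [RHS]big_mkcond.
Qed.

Section Descent.
Hypothesis p_ge1 : 1 <= p.

Lemma fLR_le_majorizer (xk z : 'rV[R]_n) : fLR p A y z <= majorizer xk z.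
Proof.
apply: ler_sum => i _.
have -> : y i - rowdot A i z = (residual xk i +
    \sum_(j < n) (N * A i j * (xk ord0 j - z ord0 j) + residual xk i)) / N.
  rewrite big_split /= sumr_const card_ord.
  under eq_bigr do rewrite -mulrA mulrBr.
  rewrite -mulr_sumr sumrB /residual /rowdot -mulr_natr.
  have -> : n%:R = N - 1 :> R by rewrite /N -natr1 addrK.
  by field; rewrite gt_eqF.
exact: abspow_jensen.
Qed.

Lemma fLR_descent (xk z : 'rV[R]_n) :
  c * \sum_(j < n) (gPROMPT p A y xk j (xk ord0 j) - gPROMPT p A y xk j (z ord0 j))
    <= fLR p A y xk - fLR p A y z.
Proof.
have := fLR_le_majorizer xk z.
by rewrite -(majorizer_id xk) !majorizer_separable sumrB; lra.
Qed.

Variables xk xk1 : 'rV[R]_n.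
Hypothesis xk1_min :
  forall j t, gPROMPT p A y xk j (xk1 ord0 j) <= gPROMPT p A y xk j t.

Let gap_ge0 j :
  0 <= gPROMPT p A y xk j (xk ord0 j) - gPROMPT p A y xk j (xk1 ord0 j).
Proof. by rewrite subr_ge0. Qed.

Lemma prompt_fLR_le : fLR p A y xk1 <= fLR p A y xk.
Proof.
rewrite -subr_ge0 (le_trans _ (fLR_descent xk xk1)) //.
by apply: mulr_ge0; [exact: ltW | exact: sumr_ge0].
Qed.

Lemma prompt_gap_le j t :
  c * (gPROMPT p A y xk j (xk ord0 j) - gPROMPT p A y xk j t)
    <= fLR p A y xk - fLR p A y xk1.
Proof.
apply: le_trans (fLR_descent xk xk1); apply: ler_wpM2l; first exact: ltW.
rewrite (bigD1 j) //= -[leLHS]addr0 lerD ?sumr_ge0 // lerD2l lerN2.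
exact: xk1_min.
Qed.

End Descent.

Section Stationarity.
Hypothesis p_gt1 : 1 < p.

Definition fLR_partial (x : 'rV[R]_n) (j : 'I_n) : R :=
  - \sum_(i < m) A i j * abspow' p (residual x i).

Lemma rowdotP i (h : R) (v x : 'rV[R]_n) :
  rowdot A i (h *: v + x) = h * rowdot A i v + rowdot A i x.
Proof.
rewrite /rowdot mulr_sumr -big_split /=; apply: eq_bigr => j _.
by rewrite !mxE; ring.
Qed.

Lemma is_derive_fLR (x v : 'rV[R]_n) :
  is_derive x v (fLR p A y) (\sum_(j < n) v ord0 j * fLR_partial x j).
Proof.
have -> : \sum_(j < n) v ord0 j * fLR_partial x j =
    \sum_(i < m) abspow' p (residual x i) * (- rowdot A i v).
  rewrite /fLR_partial /rowdot.
  under eq_bigr do rewrite mulrN mulr_sumr.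
  under [RHS]eq_bigr do rewrite mulrN mulr_sumr.
  rewrite !sumrN exchange_big; congr (- _).
  by apply: eq_bigr => i _; apply: eq_bigr => j _; ring.
have -> : fLR p A y = \sum_(i < m) (fun x => abspow p (residual x i)).
  by apply/funext => z; rewrite fct_sumE.
apply: is_derive_sum => i.
apply: (@is_derive_along_line _ _ _ _ _ _
  (abspow p \o (fun h : R => residual x i - h * rowdot A i v))).
  by move=> h; rewrite /= /residual rowdotP; congr (abspow p _); ring.
apply: is_derive1_comp; first by rewrite mul0r subr0; exact: is_derive_abspow.
by apply: is_derive_eq; rewrite add0r mul1r scale0r add0r [_%:A]mulr1.
Qed.

Lemma differentiable_rowdot i (x : 'rV[R]_n) : differentiable (rowdot A i) x.
Proof.
have -> : rowdot A i = \sum_(j < n) (A i j *: (fun z : 'rV[R]_n => z ord0 j)).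
  by apply/funext => z; rewrite fct_sumE.
apply: differentiable_sum => j; apply: differentiableZ.
exact: differentiable_coord.
Qed.

Lemma differentiable_fLR (x : 'rV[R]_n) : differentiable (fLR p A y) x.
Proof.
have -> : fLR p A y = \sum_(i < m) (abspow p \o (fun z => y i - rowdot A i z)).
  by apply/funext => z; rewrite fct_sumE.
apply: differentiable_sum => i; apply: differentiable_comp.
  by apply: differentiableB; [exact: differentiable_cst | exact: differentiable_rowdot].
apply/derivable1_diffP.
by have [] := is_derive_abspow p_gt1 (y i - rowdot A i x).
Qed.

Lemma diff_fLR_eq0 (x : 'rV[R]_n) :
  (forall j, fLR_partial x j = 0) -> 'd (fLR p A y) x = 0 :> ('rV[R]_n -> R).
Proof.
move=> partial_eq0; apply/funext => v /=.
rewrite -deriveE; last exact: differentiable_fLR.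
have [_ ->] := is_derive_fLR x v.
by rewrite big1 // => j _; rewrite partial_eq0 mulr0.
Qed.

Lemma is_derive_gPROMPT (xk : 'rV[R]_n) j (t : R) :
  is_derive t 1 (gPROMPT p A y xk j)
    (\sum_(i < m | A i j != 0) `|A i j| `^ p * abspow' p (t - sPROMPT A y xk i j)).
Proof.
have -> : gPROMPT p A y xk j = \sum_(i < m) (fun s => if A i j != 0 then
    `|A i j| `^ p * abspow p (s - sPROMPT A y xk i j) else 0).
  by apply/funext => s; rewrite fct_sumE /gPROMPT big_mkcond.
rewrite [X in is_derive _ _ _ X]big_mkcond /=; apply: is_derive_sum => i.
case: ifP => _; last exact: is_derive_cst.
have := is_derive1_comp (is_derive_abspow p_gt1 _)
  (is_derive_shift t 1 (- sPROMPT A y xk i j)).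
by rewrite mulr1 => /(is_deriveZ (`|A i j| `^ p)).
Qed.

Lemma is_derive_gPROMPT_self (xk : 'rV[R]_n) j :
  is_derive (xk ord0 j) 1 (gPROMPT p A y xk j)
    ((N `^ (p - 1))^-1 * fLR_partial xk j).
Proof.
have p_gt0 : 0 < p by apply: lt_trans p_gt1.
have term i : A i j != 0 -> A i j * abspow' p (residual xk i) =
    - N `^ (p - 1) * (`|A i j| `^ p * abspow' p (xk ord0 j - sPROMPT A y xk i j)).
  move=> a_neq0.
  have -> : residual xk i = - (N * A i j) * (xk ord0 j - sPROMPT A y xk i j).
    by rewrite /sPROMPT /residual addn1 -/N; field; rewrite a_neq0 gt_eqF.
  rewrite abspow'M normrN normrM (gtr0_norm N_gt0) powRM ?normr_ge0 ?ltW//.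
  rewrite sgrN sgrM (gtr0_sg N_gt0) mul1r -(mulr_powRB1 (normr_ge0 _) p_gt0).
  set a' := `|A i j| `^ (p - 1).
  by rewrite normrEsg; ring.
have sumE : \sum_(i < m) A i j * abspow' p (residual xk i) = - N `^ (p - 1) *
    \sum_(i < m | A i j != 0) `|A i j| `^ p * abspow' p (xk ord0 j - sPROMPT A y xk i j).
  rewrite (bigID (fun i => A i j != 0)) /= addrC big1 => [|i /negPn/eqP ->].
    by rewrite add0r mulr_sumr; exact: eq_bigr.
  by rewrite mul0r.
apply: is_derive_eq (is_derive_gPROMPT xk j (xk ord0 j)) _.
by rewrite /fLR_partial sumE mulNr opprK mulKf// gt_eqF// powR_gt0.
Qed.

Lemma gPROMPT_min_partial_eq0 (xk : 'rV[R]_n) j :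
  (forall t, gPROMPT p A y xk j (xk ord0 j) <= gPROMPT p A y xk j t) ->
  fLR_partial xk j = 0.
Proof.
move=> xk_min.
have g_derivable t : derivable (gPROMPT p A y xk j) t 1.
  by have [] := is_derive_gPROMPT xk j t.
move: (is_derive_global_min g_derivable xk_min (is_derive_gPROMPT_self xk j)).
by move/eqP; rewrite mulf_eq0 invr_eq0 gt_eqF ?powR_gt0//= => /eqP.
Qed.

Lemma cvg_gPROMPT j (u : nat -> 'rV[R]_n) (w : nat -> R) (x : 'rV[R]_n) (t : R) :
  u k @[k --> \oo] --> x -> w k @[k --> \oo] --> t ->
  gPROMPT p A y (u k) j (w k) @[k --> \oo] --> gPROMPT p A y x j t.
Proof.
move=> u_cvg w_cvg; apply: cvg_big => // [|i _]; first exact: add_continuous.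
apply: cvgM; first exact: cvg_cst.
have rowdot_cvg : rowdot A i (u k) @[k --> \oo] --> rowdot A i x.
  exact: continuous_cvg _ (differentiable_continuous (differentiable_rowdot i x)) u_cvg.
have coord_cvg : u k ord0 j @[k --> \oo] --> x ord0 j.
  exact: continuous_cvg _ (@coord_continuous R 1 n ord0 j x) u_cvg.
have s_cvg : sPROMPT A y (u k) i j @[k --> \oo] --> sPROMPT A y x i j.
  exact: cvgD coord_cvg (cvgM (cvgB (cvg_cst (y i)) rowdot_cvg) (cvg_cst _)).
exact: continuous_cvg _ (continuous_abspow p_gt1 (x := _)) (cvgB w_cvg s_cvg).
Qed.

Lemma limit_point_gPROMPT_min (x : nat -> 'rV[R]_n) (phi : nat -> nat)
    (xs : 'rV[R]_n) (l : R) :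
  (forall k j t, gPROMPT p A y (x k) j (x k.+1 ord0 j) <= gPROMPT p A y (x k) j t) ->
  (forall k, (phi k < phi k.+1)%N) ->
  x (phi k) @[k --> \oo] --> xs ->
  fLR p A y (x k) @[k --> \oo] --> l ->
  forall j t, gPROMPT p A y xs j (xs ord0 j) <= gPROMPT p A y xs j t.
Proof.
move=> x_min phi_incr x_phi_cvg f_cvg j t.
have f_phi_cvg : fLR p A y (x (phi k)) @[k --> \oo] --> l.
  exact: cvg_comp (increasing_cvgn_infty phi_incr) f_cvg.
have f_phiS_cvg : fLR p A y (x (phi k).+1) @[k --> \oo] --> l.
  apply: cvg_comp f_cvg; apply: (@increasing_cvgn_infty (fun k => (phi k).+1)).
  by move=> k; rewrite ltnS.
have gap_cvg : c * (gPROMPT p A y (x (phi k)) j (x (phi k) ord0 j) -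
    gPROMPT p A y (x (phi k)) j t) @[k --> \oo] -->
    c * (gPROMPT p A y xs j (xs ord0 j) - gPROMPT p A y xs j t).
  apply: cvgMl_tmp; apply: cvgB; apply: cvg_gPROMPT => //; last exact: cvg_cst.
  exact: continuous_cvg _ (@coord_continuous R 1 n ord0 j xs) x_phi_cvg.
have gap_le : \forall k \near \oo,
    c * (gPROMPT p A y (x (phi k)) j (x (phi k) ord0 j) -
      gPROMPT p A y (x (phi k)) j t) <=
    fLR p A y (x (phi k)) - fLR p A y (x (phi k).+1).
  by apply: nearW => k; apply: (prompt_gap_le (ltW p_gt1)); exact: x_min.
have := ler_cvg_to gap_cvg (cvgB f_phi_cvg f_phiS_cvg) gap_le.
by rewrite subrr pmulr_rle0 // subr_le0; apply; exact: _.
Qed.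

End Stationarity.

End PROMPT.

Theorem mainTheorem2 (R : realType) (m n : nat) (p : R)
  (A : 'M[R]_(m, n)) (y : 'I_m -> R) (x : nat -> 'rV[R]_n) :
  1 < p ->
  (forall j : 'I_n, exists i : 'I_m, A i j != 0) ->
  (forall (k : nat) (j : 'I_n) (t : R),
      gPROMPT p A y (x k) j (x k.+1 ord0 j) <= gPROMPT p A y (x k) j t) ->
  (forall k : nat, fLR p A y (x k.+1) <= fLR p A y (x k)) /\
  (exists l : R, (fun k => fLR p A y (x k)) @ \oo --> l) /\
  (forall xs : 'rV[R]_n,
      (exists phi : nat -> nat, (forall k, (phi k < phi k.+1)%N) /\
          (fun k => x (phi k)) @ \oo --> xs) ->
      differentiable (fLR p A y) xs /\ 'd (fLR p A y) xs = 0 :> ('rV[R]_n -> R)).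
Proof.
move=> p_gt1 _ x_min.
have f_le k : fLR p A y (x k.+1) <= fLR p A y (x k).
  by apply: (prompt_fLR_le (ltW p_gt1)); exact: x_min.
have f_cvg : fLR p A y (x k) @[k --> \oo] --> inf (range (fun k => fLR p A y (x k))).
  apply: nonincreasing_cvgn; first exact/nonincreasing_seqP.
  by exists 0 => _ [k _ <-]; apply: sumr_ge0 => i _; exact: powR_ge0.
split=> //; split; first by eexists; exact: f_cvg.
move=> xs [phi [phi_incr x_phi_cvg]].
have xs_min := limit_point_gPROMPT_min p_gt1 x_min phi_incr x_phi_cvg f_cvg.
split; first exact: differentiable_fLR.
apply: diff_fLR_eq0 => // j.
by apply: (gPROMPT_min_partial_eq0 p_gt1); exact: xs_min.
Qed.
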